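(* Let $X$ be a CAT(0) space, $T_n:X\to X$ for $n\in\mathbb{N}$, and $(\gamma_n)$ a sequence of positive reals. If $(T_n)$ is jointly firmly nonexpansive with respect to $(\gamma_n)$, then $(T_n)$ is jointly $(P_2)$ with respect to $(\gamma_n)$.
   Context: A geodesic space $(X,d)$ is CAT(0) if for all $z\in X$, all geodesics $\gamma:[a,b]\to X$ and all $t\in[0,1]$, $d^2(z,\gamma((1-t)a+tb))\le(1-t)d^2(z,\gamma(a))+td^2(z,\gamma(b))-t(1-t)d^2(\gamma(a),\gamma(b))$. CAT(0) spaces are uniquely geodesic; for $x,y\in X$ and $t\in[0,1]$, $(1-t)x+ty$ denotes the point at distance $t\,d(x,y)$ from $x$ on the geodesic from $x$ to $y$. The family $(T_n)$ is jointly firmly nonexpansive with respect to $(\gamma_n)$ if for all $n,m\in\mathbb{N}$, $x,y\in X$ and $\alpha,\beta\in[0,1]$ with $(1-\alpha)\gamma_n=(1-\beta)\gamma_m$, one has $d(T_nx,T_my)\le d((1-\alpha)x+\alpha T_nx,(1-\beta)y+\beta T_my)$. It is jointly $(P_2)$ with respect to $(\gamma_n)$ if for all $n,m\in\mathbb{N}$ and $x,y\in X$, $\frac1{\gamma_m}\big(d^2(T_nx,T_my)+d^2(y,T_my)-d^2(y,T_nx)\big)\le\frac1{\gamma_n}\big(d^2(x,T_my)-d^2(x,T_nx)-d^2(T_nx,T_my)\big)$. *)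

From Stdlib Require Import Reals ClassicalEpsilon.
Open Scope R_scope.

Definition is_metric {X : Type} (d : X -> X -> R) : Prop :=
  (forall x y, 0 <= d x y) /\
  (forall x y, d x y = 0 <-> x = y) /\
  (forall x y, d x y = d y x) /\
  (forall x y z, d x z <= d x y + d y z).

Definition geodesic {X : Type} (d : X -> X -> R) (g : R -> X) (a b : R) : Prop :=
  a <= b /\
  forall s t, a <= s <= b -> a <= t <= b -> d (g s) (g t) = Rabs (s - t).

Definition geodesic_space {X : Type} (d : X -> X -> R) : Prop :=
  is_metric d /\
  forall x y : X, exists g a b, geodesic d g a b /\ g a = x /\ g b = y.

Definition CAT0 {X : Type} (d : X -> X -> R) : Prop :=
  geodesic_space d /\
  forall (z : X) (g : R -> X) (a b : R), geodesic d g a b ->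
  forall t, 0 <= t <= 1 ->
    (d z (g ((1 - t) * a + t * b)))^2 <=
      (1 - t) * (d z (g a))^2 + t * (d z (g b))^2
      - t * (1 - t) * (d (g a) (g b))^2.

(* (1-t)x + ty : the point of parameter t on the (unique, in CAT(0)) geodesic
   from x to y, i.e. at distance t d(x,y) from x on that geodesic. *)
Definition convcomb {X : Type} (d : X -> X -> R) (x y : X) (t : R) : X :=
  epsilon (inhabits x) (fun p => exists g a b,
    geodesic d g a b /\ g a = x /\ g b = y /\ p = g ((1 - t) * a + t * b)).

Definition jointly_firmly_nonexpansive {X : Type} (d : X -> X -> R)
  (T : nat -> X -> X) (gam : nat -> R) : Prop :=
  forall (n m : nat) (x y : X) (al be : R),
    0 <= al <= 1 -> 0 <= be <= 1 ->
    (1 - al) * gam n = (1 - be) * gam m ->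
    d (T n x) (T m y) <= d (convcomb d x (T n x) al) (convcomb d y (T m y) be).

Definition jointly_P2 {X : Type} (d : X -> X -> R)
  (T : nat -> X -> X) (gam : nat -> R) : Prop :=
  forall (n m : nat) (x y : X),
    / gam m * ((d (T n x) (T m y))^2 + (d y (T m y))^2 - (d y (T n x))^2)
    <= / gam n * ((d x (T m y))^2 - (d x (T n x))^2 - (d (T n x) (T m y))^2).

(* For a small step e > 0 take alpha = 1 - e/gam n and beta = 1 - e/gam m, so that
   (1 - alpha) gam n = e = (1 - beta) gam m.  Joint firm nonexpansiveness bounds
   d(T_n x, T_m y) by the distance of the two convex combinations, and applying the
   CAT(0) inequality twice bounds that distance by the four sides and the diagonals
   of the quadrilateral x, T_n x, T_m y, y.  Expanding in e, the defect of (P_2)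
   times e is at most e^2 times a constant; dividing by e and letting e -> 0 gives
   (P_2). *)

From Stdlib Require Import Reals Lra ClassicalEpsilon.
Open Scope R_scope.

Lemma convcomb_geodesic (X : Type) (d : X -> X -> R) :
  geodesic_space d -> forall x y t,
  exists g a b, geodesic d g a b /\ g a = x /\ g b = y /\
    convcomb d x y t = g ((1 - t) * a + t * b).
Proof.
  intros [_ Hgeo] x y t.
  destruct (Hgeo x y) as [g [a [b [Hg [Ha Hb]]]]].
  unfold convcomb; apply epsilon_spec.
  exists (g ((1 - t) * a + t * b)), g, a, b; auto.
Qed.

Lemma dist_convcomb_sq_le (X : Type) (d : X -> X -> R) :
  CAT0 d -> forall z x y t, 0 <= t <= 1 ->
  d z (convcomb d x y t) ^ 2 <=
    (1 - t) * d z x ^ 2 + t * d z y ^ 2 - t * (1 - t) * d x y ^ 2.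
Proof.
  intros [Hgs Hcat] z x y t Ht.
  destruct (convcomb_geodesic X d Hgs x y t) as [g [a [b [Hg [<- [<- ->]]]]]].
  now apply Hcat.
Qed.

Lemma dist_convcomb2_sq_le (X : Type) (d : X -> X -> R) :
  CAT0 d -> forall x u y v al be, 0 <= al <= 1 -> 0 <= be <= 1 ->
  d (convcomb d x u al) (convcomb d y v be) ^ 2 <=
    (1 - be) * ((1 - al) * d x y ^ 2 + al * d y u ^ 2 - al * (1 - al) * d x u ^ 2)
    + be * ((1 - al) * d x v ^ 2 + al * d u v ^ 2 - al * (1 - al) * d x u ^ 2)
    - be * (1 - be) * d y v ^ 2.
Proof.
  intros Hcat x u y v al be Hal Hbe.
  assert (Hsym : forall a b, d a b = d b a)
    by (destruct Hcat as [[[_ [_ [Hsym _]]] _] _]; exact Hsym).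
  set (p := convcomb d x u al).
  assert (Hpy := dist_convcomb_sq_le X d Hcat y x u al Hal).
  assert (Hpv := dist_convcomb_sq_le X d Hcat v x u al Hal).
  assert (Hpq := dist_convcomb_sq_le X d Hcat p y v be Hbe).
  rewrite (Hsym y x) in Hpy; rewrite (Hsym v x), (Hsym v u) in Hpv.
  rewrite (Hsym p y), (Hsym p v) in Hpq.
  fold p in Hpy, Hpv.
  assert (Hpy' := Rmult_le_compat_l (1 - be) _ _ ltac:(lra) Hpy).
  assert (Hpv' := Rmult_le_compat_l be _ _ ltac:(lra) Hpv).
  lra.
Qed.

Lemma P2_defect_le_step (X : Type) (d : X -> X -> R) :
  CAT0 d -> forall x u y v a b e, 0 < e -> 0 <= e * a <= 1 -> 0 <= e * b <= 1 ->
  d u v <= d (convcomb d x u (1 - e * a)) (convcomb d y v (1 - e * b)) ->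
  b * (d u v ^ 2 + d y v ^ 2 - d y u ^ 2) - a * (d x v ^ 2 - d x u ^ 2 - d u v ^ 2)
  <= e * (a * b * (d u v ^ 2 + d x y ^ 2 - d y u ^ 2 - d x v ^ 2)
          + a ^ 2 * d x u ^ 2 + b ^ 2 * d y v ^ 2).
Proof.
  intros Hcat x u y v a b e He Hea Heb Hle.
  assert (Huv : d u v ^ 2 <=
    d (convcomb d x u (1 - e * a)) (convcomb d y v (1 - e * b)) ^ 2).
  { destruct Hcat as [[[Hnn _] _] _].
    apply pow_incr; split; [apply Hnn | exact Hle]. }
  assert (Hquad := dist_convcomb2_sq_le X d Hcat x u y v (1 - e * a) (1 - e * b)
    ltac:(lra) ltac:(lra)).
  (* Writing the goal as D <= e * K, the quadrilateral bound minus d(u,v)^2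
     expands to e^2 K - e D. *)
  apply (Rmult_le_reg_l e); [exact He |].
  lra.
Qed.

Lemma Rmult_inv_unit_interval (e g : R) : 0 < g -> 0 <= e <= g ->
  0 <= e * / g <= 1.
Proof.
  intros Hg He.
  pose proof (Rinv_0_lt_compat g Hg).
  split; [apply Rmult_le_pos; lra |].
  rewrite <- (Rinv_r g) by lra.
  apply Rmult_le_compat_r; lra.
Qed.

Lemma Rle_0_of_forall_le_mul (D K e0 : R) : 0 < e0 ->
  (forall e, 0 < e <= e0 -> D <= e * K) -> D <= 0.
Proof.
  intros He0 HD.
  destruct (Rle_dec K 0) as [HK | HK].
  - pose proof (HD e0 (conj He0 (Rle_refl e0))); nra.
  - destruct (Rle_dec D 0) as [| HDpos]; [assumption |].
    set (e := Rmin e0 (D / (2 * K))).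
    assert (HeK : e * K <= D / 2).
    { replace (D / 2) with (D / (2 * K) * K) by (field; lra).
      apply Rmult_le_compat_r; [lra | apply Rmin_r]. }
    assert (He : 0 < e <= e0).
    { split; [apply Rmin_glb_lt; [lra | apply Rdiv_lt_0_compat; lra] | apply Rmin_l]. }
    pose proof (HD e He); lra.
Qed.

Theorem proposition3p9 (X : Type) (d : X -> X -> R) (T : nat -> X -> X)
  (gam : nat -> R) :
  CAT0 d ->
  (forall n, 0 < gam n) ->
  jointly_firmly_nonexpansive d T gam ->
  jointly_P2 d T gam.
Proof.
  intros Hcat Hgam Hfne n m x y.
  pose proof (Hgam n) as Hn; pose proof (Hgam m) as Hm.
  apply Rminus_le.
  eapply (Rle_0_of_forall_le_mul _ _ (Rmin (gam n) (gam m)));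
    [now apply Rmin_glb_lt |].
  intros e [He Hemin].
  assert (Hen := Rmult_inv_unit_interval e (gam n) Hn
    (conj (Rlt_le _ _ He) (Rle_trans _ _ _ Hemin (Rmin_l _ _)))).
  assert (Hem := Rmult_inv_unit_interval e (gam m) Hm
    (conj (Rlt_le _ _ He) (Rle_trans _ _ _ Hemin (Rmin_r _ _)))).
  eapply Rle_trans;
    [| apply (P2_defect_le_step X d Hcat x (T n x) y (T m y) _ _ e He Hen Hem)].
  - lra.
  - apply Hfne; [lra | lra |].
    field; lra.
Qed.
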